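(* Let $\mathcal{A}=\mathcal{R}*_K\mathcal{S}*_L\mathcal{T}\in\mathbb{C}^{I_1\times\cdots\times I_N\times J_1\times\cdots\times J_M}$, where $\mathcal{R}\in\mathbb{C}^{I_1\times\cdots\times I_N\times H_1\times\cdots\times H_K}$, $\mathcal{S}\in\mathbb{C}^{H_1\times\cdots\times H_K\times G_1\times\cdots\times G_L}$ and $\mathcal{T}\in\mathbb{C}^{G_1\times\cdots\times G_L\times J_1\times\cdots\times J_M}$, and let $\mathcal{A}_{\pi\dagger}=\mathcal{T}^{\dagger}*_L(\mathcal{R}^{\dagger}*_N\mathcal{A}*_M\mathcal{T}^{\dagger})^{\dagger}*_K\mathcal{R}^{\dagger}$. Consider the factorization of $\mathcal{A}_{\pi\dagger}$ with factors $\mathcal{R}'=\mathcal{T}^{\dagger}$, $\mathcal{S}'=(\mathcal{R}^{\dagger}*_N\mathcal{A}*_M\mathcal{T}^{\dagger})^{\dagger}$, $\mathcal{T}'=\mathcal{R}^{\dagger}$, and the corresponding product Moore–Penrose inverse $(\mathcal{A}_{\pi\dagger})_{\pi\dagger}=\mathcal{T}'^{\dagger}*_K(\mathcal{R}'^{\dagger}*_M\mathcal{A}_{\pi\dagger}*_N\mathcal{T}'^{\dagger})^{\dagger}*_L\mathcal{R}'^{\dagger}=\mathcal{R}*_K(\mathcal{T}*_M\mathcal{A}_{\pi\dagger}*_N\mathcal{R})^{\dagger}*_L\mathcal{T}$. Then $(\mathcal{A}_{\pi\dagger})_{\pi\dagger}=\mathcal{A}$.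
   Context: $\mathbb{C}^{I_1\times\cdots\times I_N}$ denotes the set of complex tensors of order $N$ and dimension $I_1\times\cdots\times I_N$. For $\mathcal{A}\in\mathbb{C}^{I_1\times\cdots\times I_N\times K_1\times\cdots\times K_N}$ and $\mathcal{B}\in\mathbb{C}^{K_1\times\cdots\times K_N\times J_1\times\cdots\times J_M}$, the Einstein product $\mathcal{A}*_N\mathcal{B}$ is defined by $(\mathcal{A}*_N\mathcal{B})_{i_1\dots i_N j_1\dots j_M}=\sum_{k_1,\dots,k_N}a_{i_1\dots i_N k_1\dots k_N}b_{k_1\dots k_N j_1\dots j_M}$; it is associative. $\mathcal{A}^H$ denotes the conjugate transpose. For $\mathcal{A}\in\mathbb{C}^{I_1\times\cdots\times I_N\times J_1\times\cdots\times J_M}$ the Moore–Penrose inverse $\mathcal{A}^{\dagger}$ is the unique $\mathcal{X}\in\mathbb{C}^{J_1\times\cdots\times J_M\times I_1\times\cdots\times I_N}$ with $\mathcal{A}*_M\mathcal{X}*_N\mathcal{A}=\mathcal{A}$, $\mathcal{X}*_N\mathcal{A}*_M\mathcal{X}=\mathcal{X}$, $(\mathcal{A}*_M\mathcal{X})^H=\mathcal{A}*_M\mathcal{X}$, $(\mathcal{X}*_N\mathcal{A})^H=\mathcal{X}*_N\mathcal{A}$ (in particular $(\mathcal{A}^{\dagger})^{\dagger}=\mathcal{A}$). For a tensor $\mathcal{Z}$ with a factorization $\mathcal{Z}=\mathcal{P}*_k\mathcal{Q}*_l\mathcal{U}$, its product Moore–Penrose inverse relative to that factorization is $\mathcal{U}^{\dagger}*_l(\mathcal{P}^{\dagger}*\mathcal{Z}*\mathcal{U}^{\dagger})^{\dagger}*_k\mathcal{P}^{\dagger}$,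 with contractions over the appropriate shared modes. *)

From HB Require Import structures.
From mathcomp Require Import all_boot all_order all_algebra.
From mathcomp Require Import reals.
From mathcomp Require Import complex.
From Stdlib Require Import ClassicalEpsilon.
Set Implicit Arguments. Unset Strict Implicit. Unset Printing Implicit Defensive.
Import Order.TTheory GRing.Theory Num.Theory.
Local Open Scope ring_scope.

Definition midx (n : nat) (d : 'I_n -> nat) := {dffun forall k : 'I_n, 'I_(d k)}.

Definition tensor (R : realType) (N : nat) (I : 'I_N -> nat)
  (M : nat) (J : 'I_M -> nat) := midx I -> midx J -> R[i].

Definition ein (R : realType) N (I : 'I_N -> nat) K (H : 'I_K -> nat)
  M (J : 'I_M -> nat) (A : tensor R I H) (B : tensor R H J) : tensor R I J :=
  fun i j => \sum_(k : midx H) A i k * B k j.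

Definition ctr (R : realType) N (I : 'I_N -> nat) M (J : 'I_M -> nat)
  (A : tensor R I J) : tensor R J I := fun j i => (A i j)^*.

Definition is_MP (R : realType) N (I : 'I_N -> nat) M (J : 'I_M -> nat)
  (A : tensor R I J) (X : tensor R J I) : Prop :=
  [/\ ein (ein A X) A = A, ein (ein X A) X = X,
      ctr (ein A X) = ein A X & ctr (ein X A) = ein X A].

Definition zero_tensor (R : realType) N (I : 'I_N -> nat) M (J : 'I_M -> nat)
  : tensor R I J := fun _ _ => 0.

(* The Moore-Penrose inverse: the (unique) X satisfying the Penrose
   equations (chosen by Hilbert's epsilon; it exists for every tensor). *)
Definition pinv (R : realType) N (I : 'I_N -> nat) M (J : 'I_M -> nat)
  (A : tensor R I J) : tensor R J I :=
  epsilon (inhabits (@zero_tensor R _ J _ I)) (fun X => is_MP A X).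

Definition pmp (R : realType) N (I : 'I_N -> nat) K (H : 'I_K -> nat)
  L (G : 'I_L -> nat) M (J : 'I_M -> nat)
  (P : tensor R I H) (Z : tensor R I J) (U : tensor R G J) : tensor R J I :=
  ein (ein (pinv U) (pinv (ein (ein (pinv P) Z) (pinv U)))) (pinv P).

(* Put X := R^+ A T^+.  The Hermitian idempotents R^+ R and T T^+ fix X on the
   left and on the right, hence fix X^+ on the right and on the left, so
   T A_pi R = (T T^+) X^+ (R^+ R) = X^+.  Therefore
   (A_pi)_pi = R X^++ T = (R R^+ R) S (T T^+ T) = A.
   That pinv satisfies the Penrose equations rests on the existence of a
   Moore-Penrose inverse, given by Urquhart's formula A^(1,4) A A^(1,3), where
   A^* G is a {1,4}-inverse for any inner inverse G of A A^*; inner inverses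
   come from the flattened matrix. *)

From mathcomp Require Import all_boot all_order all_algebra.
From mathcomp Require Import reals complex.
From Stdlib Require Import FunctionalExtensionality ClassicalEpsilon.
Set Implicit Arguments. Unset Strict Implicit. Unset Printing Implicit Defensive.
Import Order.TTheory GRing.Theory Num.Theory.
Local Open Scope ring_scope.

Section Tensors.
Variable R : realType.

Lemma tensorP N (I : 'I_N -> nat) M (J : 'I_M -> nat) (A B : tensor R I J) :
  (forall i j, A i j = B i j) -> A = B.
Proof. by move=> eqAB; do 2!apply: functional_extensionality => ?. Qed.

Lemma einA N (I : 'I_N -> nat) K (H : 'I_K -> nat) L (G : 'I_L -> nat)
  M (J : 'I_M -> nat) (A : tensor R I H) (B : tensor R H G) (C : tensor R G J) :
  ein (ein A B) C = ein A (ein B C).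
Proof.
apply: tensorP => i j; rewrite /ein.
under eq_bigr do rewrite big_distrl /=.
rewrite exchange_big; apply: eq_bigr => k _; rewrite big_distrr.
by apply: eq_bigr => l _; rewrite -mulrA.
Qed.

Lemma ctrK N (I : 'I_N -> nat) M (J : 'I_M -> nat) (A : tensor R I J) :
  ctr (ctr A) = A.
Proof. by apply: tensorP => i j; rewrite /ctr conjCK. Qed.

Lemma ctr_ein N (I : 'I_N -> nat) K (H : 'I_K -> nat) M (J : 'I_M -> nat)
  (A : tensor R I H) (B : tensor R H J) : ctr (ein A B) = ein (ctr B) (ctr A).
Proof.
apply: tensorP => j i; rewrite /ein /ctr rmorph_sum.
by apply: eq_bigr => k _; rewrite rmorphM mulrC.
Qed.

Definition mx_of_tensor N (I : 'I_N -> nat) M (J : 'I_M -> nat)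
  (A : tensor R I J) : 'M[R[i]]_(#|{: midx I}|, #|{: midx J}|) :=
  \matrix_(a, b) A (enum_val a) (enum_val b).

Definition tensor_of_mx N (I : 'I_N -> nat) M (J : 'I_M -> nat)
  (B : 'M[R[i]]_(#|{: midx I}|, #|{: midx J}|)) : tensor R I J :=
  fun i j => B (enum_rank i) (enum_rank j).

Lemma tensor_of_mxK N (I : 'I_N -> nat) M (J : 'I_M -> nat) :
  cancel (@tensor_of_mx N I M J) (@mx_of_tensor N I M J).
Proof. by move=> B; apply/matrixP => a b; rewrite mxE /tensor_of_mx !enum_valK. Qed.

Lemma mx_of_tensor_inj N (I : 'I_N -> nat) M (J : 'I_M -> nat) :
  injective (@mx_of_tensor N I M J).
Proof.
move=> A B /matrixP eqAB; apply: tensorP => i j.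
by have := eqAB (enum_rank i) (enum_rank j); rewrite !mxE !enum_rankK.
Qed.

Lemma mx_of_ein N (I : 'I_N -> nat) K (H : 'I_K -> nat) M (J : 'I_M -> nat)
  (A : tensor R I H) (B : tensor R H J) :
  mx_of_tensor (ein A B) = mx_of_tensor A *m mx_of_tensor B.
Proof.
apply/matrixP => a b; rewrite !mxE /ein (eq_bigl [in predT]) // big_enum_val.
by apply: eq_bigr => c _; rewrite !mxE.
Qed.

Lemma eq_gram N (I : 'I_N -> nat) M (J : 'I_M -> nat) (X Y : tensor R I J)
  (W : tensor R I I) :
  ein X (ctr X) = W -> ein X (ctr Y) = W -> ein Y (ctr X) = W ->
  ein Y (ctr Y) = W -> X = Y.
Proof.
move=> eXX eXY eYX eYY; apply: tensorP => i j.
have diag (U V : tensor R I J) : ein U (ctr V) = W ->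
    \sum_k U i k * (V i k)^* = W i i by move=> <-.
have sum_norm0 : \sum_k (X i k - Y i k) * (X i k - Y i k)^* = 0.
  under eq_bigr do rewrite rmorphB mulrBl !mulrBr.
  by rewrite !sumrB !diag // !subrr.
have := psumr_eq0P (fun k _ => mul_conjC_ge0 (X i k - Y i k)) sum_norm0 (i := j) isT.
by move/eqP; rewrite mul_conjC_eq0 subr_eq0 => /eqP.
Qed.

Lemma ctr_gram N (I : 'I_N -> nat) M (J : 'I_M -> nat) (A : tensor R I J) :
  ctr (ein A (ctr A)) = ein A (ctr A).
Proof. by rewrite ctr_ein ctrK. Qed.

Lemma ein_gram_fix N (I : 'I_N -> nat) M (J : 'I_M -> nat) (A : tensor R I J)
  (Y : tensor R I I) :
  ein Y (ein A (ctr A)) = ein A (ctr A) -> ein Y A = A.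
Proof.
move=> fixY; have fixY' := congr1 (@ctr _ _ _ _ _) fixY.
rewrite ctr_ein ctr_gram in fixY'.
apply: (eq_gram (W := ein A (ctr A))) => //.
- by rewrite ctr_ein -einA (einA Y) fixY fixY'.
- by rewrite einA fixY.
- by rewrite ctr_ein -einA fixY'.
Qed.

Lemma inner_inverse_exists N (I : 'I_N -> nat) M (J : 'I_M -> nat)
  (A : tensor R I J) : exists G : tensor R J I, ein (ein A G) A = A.
Proof.
exists (tensor_of_mx (pinvmx (mx_of_tensor A))); apply: mx_of_tensor_inj.
by rewrite !mx_of_ein tensor_of_mxK mulmxKpV.
Qed.

Lemma inverse14_exists N (I : 'I_N -> nat) M (J : 'I_M -> nat)
  (A : tensor R I J) :
  exists X : tensor R J I, ein (ein A X) A = A /\ ctr (ein X A) = ein X A.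
Proof.
have [G innerG] := inner_inverse_exists (ein A (ctr A)).
have innerGh : ein (ein (ein A (ctr A)) (ctr G)) (ein A (ctr A)) = ein A (ctr A).
  by move: (congr1 (@ctr _ _ _ _ _) innerG); rewrite !ctr_ein !ctrK !einA.
have fixG := ein_gram_fix innerG.
have fixGh := ein_gram_fix innerGh.
have fixGh' : ein (ein (ein (ctr A) G) A) (ctr A) = ctr A.
  by move: (congr1 (@ctr _ _ _ _ _) fixGh); rewrite !ctr_ein !ctrK !einA.
exists (ein (ctr A) G); split; first by rewrite -einA fixG.
rewrite !ctr_ein ctrK -einA; symmetry.
transitivity (ein (ein (ein (ein (ctr A) G) A) (ctr A)) (ein (ctr G) A)).
  by move: fixGh; rewrite !einA => ->.
by rewrite fixGh' einA.
Qed.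

Lemma inverse13_exists N (I : 'I_N -> nat) M (J : 'I_M -> nat)
  (A : tensor R I J) :
  exists X : tensor R J I, ein (ein A X) A = A /\ ctr (ein A X) = ein A X.
Proof.
have [X [innerX hermX]] := inverse14_exists (ctr A).
exists (ctr X); split.
  by rewrite -[RHS]ctrK -[in RHS]innerX !ctr_ein ctrK einA.
by rewrite ctr_ein ctrK -hermX ctr_ein ctrK.
Qed.

Lemma is_MP_urquhart N (I : 'I_N -> nat) M (J : 'I_M -> nat)
  (A : tensor R I J) (X4 X3 : tensor R J I) :
  ein (ein A X4) A = A -> ctr (ein X4 A) = ein X4 A ->
  ein (ein A X3) A = A -> ctr (ein A X3) = ein A X3 ->
  is_MP A (ein (ein X4 A) X3).
Proof.
move=> inner4 herm4 inner3 herm3.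
have eAX : ein A (ein (ein X4 A) X3) = ein A X3 by rewrite -!einA inner4.
have eXA : ein (ein (ein X4 A) X3) A = ein X4 A by rewrite !einA -(einA A) inner3.
split; rewrite ?eAX ?eXA //.
by rewrite -einA (einA X4) -(einA A) inner4.
Qed.

Lemma MP_exists N (I : 'I_N -> nat) M (J : 'I_M -> nat) (A : tensor R I J) :
  exists X, is_MP A X.
Proof.
have [X4 [inner4 herm4]] := inverse14_exists A.
have [X3 [inner3 herm3]] := inverse13_exists A.
by exists (ein (ein X4 A) X3); apply: is_MP_urquhart.
Qed.

Lemma MP_uniq N (I : 'I_N -> nat) M (J : 'I_M -> nat) (A : tensor R I J)
  (X Y : tensor R J I) : is_MP A X -> is_MP A Y -> X = Y.
Proof.
move=> [x1 x2 x3 x4] [y1 y2 y3 y4].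
have eX : X = ein (ein X A) Y.
  have hA : ctr A = ein (ctr A) (ein (ctr Y) (ctr A)) by rewrite -!ctr_ein y1.
  transitivity (ein X (ein (ctr X) (ctr A))); first by rewrite -ctr_ein x3 -einA x2.
  rewrite hA -(einA (ctr X)) -ctr_ein x3 -ctr_ein y3.
  by rewrite -!einA x2.
have eY : Y = ein (ein X A) Y.
  have hA : ctr A = ein (ein (ctr A) (ctr X)) (ctr A) by rewrite -!ctr_ein -einA x1.
  transitivity (ein (ein (ctr A) (ctr Y)) Y); first by rewrite -ctr_ein y4 y2.
  rewrite hA (einA _ (ctr A)) -ctr_ein x4 -ctr_ein y4.
  by rewrite !einA -(einA Y) y2.
by rewrite eX -eY.
Qed.

Lemma pinvP N (I : 'I_N -> nat) M (J : 'I_M -> nat) (A : tensor R I J) :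
  is_MP A (pinv A).
Proof. by rewrite /pinv; apply: epsilon_spec; apply: MP_exists. Qed.

Lemma pinvK N (I : 'I_N -> nat) M (J : 'I_M -> nat) (A : tensor R I J) :
  pinv (pinv A) = A.
Proof. by have [a1 a2 a3 a4] := pinvP A; apply: MP_uniq (pinvP _) _. Qed.

Lemma ein_pinv_proj N (I : 'I_N -> nat) M (J : 'I_M -> nat) (X : tensor R I J)
  (P : tensor R I I) :
  ctr P = P -> ein P X = X -> ein (pinv X) P = pinv X.
Proof.
move=> hermP fixX; have [_ x2 x3 _] := pinvP X.
have eX : ein (ctr X) P = ctr X by rewrite -[in RHS]fixX ctr_ein hermP.
have eXp : pinv X = ein (pinv X) (ein (ctr (pinv X)) (ctr X)).
  by rewrite -ctr_ein x3 -einA x2.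
by rewrite [in LHS]eXp !einA eX -eXp.
Qed.

Lemma ein_proj_pinv N (I : 'I_N -> nat) M (J : 'I_M -> nat) (X : tensor R I J)
  (Q : tensor R J J) :
  ctr Q = Q -> ein X Q = X -> ein Q (pinv X) = pinv X.
Proof.
move=> hermQ fixX; have [_ x2 _ x4] := pinvP X.
have eX : ein Q (ctr X) = ctr X by rewrite -[in RHS]fixX ctr_ein hermQ.
have eXp : pinv X = ein (ein (ctr X) (ctr (pinv X))) (pinv X).
  by rewrite -ctr_ein x4 x2.
by rewrite [in LHS]eXp -!einA eX -eXp.
Qed.

Lemma ein_pmp N (I : 'I_N -> nat) K (H : 'I_K -> nat) L (G : 'I_L -> nat)
  M (J : 'I_M -> nat) (P : tensor R I H) (Z : tensor R I J) (U : tensor R G J) :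
  ein (ein U (pmp P Z U)) P = pinv (ein (ein (pinv P) Z) (pinv U)).
Proof.
have [_ p2 _ p4] := pinvP P; have [_ u2 u3 _] := pinvP U.
set X := ein (ein (pinv P) Z) (pinv U).
have fixl : ein (ein (pinv P) P) X = X by rewrite /X -!einA p2.
have fixr : ein X (ein U (pinv U)) = X by rewrite /X !einA -(einA (pinv U)) u2.
transitivity (ein (ein (ein U (pinv U)) (pinv X)) (ein (pinv P) P)).
  by rewrite /pmp -/X !einA.
by rewrite ein_proj_pinv // ein_pinv_proj.
Qed.

End Tensors.

Theorem theorem3p12 (R : realType)
  (N : nat) (I : 'I_N -> nat) (K : nat) (H : 'I_K -> nat)
  (L : nat) (G : 'I_L -> nat) (M : nat) (J : 'I_M -> nat)
  (Rt : tensor R I H) (St : tensor R H G) (Tt : tensor R G J) :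
  let A := ein (ein Rt St) Tt in
  let Api := pmp Rt A Tt in
  pmp (pinv Tt) Api (pinv Rt) = A.
Proof.
move=> A Api; rewrite {1}/pmp !pinvK ein_pmp pinvK.
have [r1 _ _ _] := pinvP Rt; have [t1 _ _ _] := pinvP Tt.
transitivity (ein (ein (ein (ein Rt (pinv Rt)) Rt) St) (ein (ein Tt (pinv Tt)) Tt)).
  by rewrite /A !einA.
by rewrite r1 t1.
Qed.
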